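(* Let $r$ be a parameter and let $H=(h_{n,k})_{n,k\ge0}$ be the exponential Riordan array $\left[e^x,x(1+rx/2)\right]$ (its $h$-matrix is $H$ itself). Let $\Gamma=(\gamma_{n,k})$ be its $\gamma$-matrix, and let $eF_r=H\cdot[e^x,x]$ be its $f$-matrix. Then, with ordinary generating functions $\sum_{n,k}a_{n,k}x^ny^k$: (i) the ordinary generating function of $\Gamma$ is $\mathcal{J}(1,1,1,\ldots;\, ry,2ry,3ry,\ldots)$; (ii) the ordinary generating function of $H$ is $\mathcal{J}(y+1,y+1,y+1,\ldots;\, ry,2ry,3ry,\ldots)$; (iii) the ordinary generating function of the reversal of $eF_r$ (the matrix with $(n,k)$ entry equal to the $(n,n-k)$ entry of $eF_r$) is $\mathcal{J}(2y+1,2y+1,2y+1,\ldots;\, ry(y+1),2ry(y+1),3ry(y+1),\ldots)$.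
   Context: An exponential Riordan array $[g(x),f(x)]$ is the lower-triangular matrix $(a_{n,k})_{n,k\ge0}$ with $a_{n,k}=\frac{n!}{k!}[x^n]g(x)f(x)^k$, where $g(0)=1$, $f(0)=0$, $f'(0)=1$; $[e^x,x]$ is the binomial matrix $\left(\binom{n}{k}\right)$. The matrix $H=\left[e^x,x(1+rx/2)\right]$ is Pascal-like: $h_{n,0}=h_{n,n}=1$ and $h_{n,n-k}=h_{n,k}$. Its $\gamma$-matrix $\Gamma=(\gamma_{n,k})_{0\le k\le \lfloor n/2\rfloor}$ is defined by $\sum_{k=0}^n h_{n,k}y^k=\sum_{k=0}^{\lfloor n/2\rfloor}\gamma_{n,k}\,y^k(1+y)^{n-2k}$ for all $n\ge0$. The $f$-matrix of $H$ is the product $H\cdot[e^x,x]$. The notation $\mathcal{J}(\alpha_1,\alpha_2,\ldots;\beta_1,\beta_2,\ldots)$ denotes the Jacobi continued fraction $\cfrac{1}{1-\alpha_1x-\cfrac{\beta_1x^2}{1-\alpha_2x-\cfrac{\beta_2x^2}{1-\cdots}}}$, a formal power series in $x$. *)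

From mathcomp Require Import all_boot all_algebra.
Set Implicit Arguments. Unset Strict Implicit. Unset Printing Implicit Defensive.
Import GRing.Theory.
Local Open Scope ring_scope.

(* Formal power series in x over a ring T, as coefficient sequences. *)
Definition fps (T : Type) := nat -> T.

Section Series.
Variable T : ringType.
Definition sC (c : T) : fps T := fun n => if n == 0%N then c else 0.
Definition sone : fps T := sC 1.
Definition sx : fps T := fun n => if n == 1%N then 1 else 0.
Definition sadd (a b : fps T) : fps T := fun n => a n + b n.
Definition sopp (a : fps T) : fps T := fun n => - a n.
Definition ssub (a b : fps T) : fps T := sadd a (sopp b).
Definition smul (a b : fps T) : fps T :=
  fun n => \sum_(i < n.+1) a i * b (n - i)%N.
Definition sexpn (a : fps T) (k : nat) : fps T := iter k (smul a) sone.
End Series.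

Section SeriesInv.
Variable T : unitRingType.
(* multiplicative inverse of a power series whose constant term is a unit:
   b_0 = a_0^-1,  b_n = - a_0^-1 * sum_{i=1}^{n} a_i b_{n-i} *)
Fixpoint sinv_rec (a : fps T) (n : nat) : seq T :=
  (* returns [:: b_0; ...; b_n] *)
  match n with
  | 0 => [:: (a 0%N)^-1]
  | n'.+1 => let bs := sinv_rec a n' in
      rcons bs (- (a 0%N)^-1 *
        \sum_(i < n'.+1) a i.+1 * nth 0 bs (n' - i)%N)
  end.
Definition sinv (a : fps T) : fps T := fun n => nth 0 (sinv_rec a n) n.
End SeriesInv.

Definition sexp (R : fieldType) : fps R := fun n => (n`!%:R)^-1.

Definition exp_riordan (R : fieldType) (g f : fps R) (n k : nat) : R :=
  n`!%:R / k`!%:R * smul g (sexpn f k) n.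

Definition Hmat (R : fieldType) (r : R) : nat -> nat -> R :=
  exp_riordan (sexp R) (sadd (sx R) (smul (sC (r / 2%:R)) (smul (sx R) (sx R)))).

Definition binmat (R : fieldType) : nat -> nat -> R :=
  exp_riordan (sexp R) (sx R).

Definition lt_mxmul (R : ringType) (A B : nat -> nat -> R) (n k : nat) : R :=
  \sum_(j < n.+1) A n j * B j k.

Definition eFmat (R : fieldType) (r : R) : nat -> nat -> R :=
  lt_mxmul (Hmat r) (binmat R).

Definition revmat (R : ringType) (A : nat -> nat -> R) (n k : nat) : R :=
  if (k <= n)%N then A n (n - k)%N else 0.

Definition is_gamma_matrix (R : ringType) (h g : nat -> nat -> R) : Prop :=
  (forall n k, (n./2 < k)%N -> g n k = 0) /\
  forall n : nat,
    \sum_(k < n.+1) h n k *: ('X^k : {poly R}) =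
    \sum_(k < n./2.+1) g n k *: ('X^k * (1 + 'X) ^+ (n - k.*2)%N).

(* Ordinary generating function sum_{n,k} a_{n,k} x^n y^k of a lower
   triangular matrix, as a power series in x with coefficients in R[y]. *)
Definition ogf (R : ringType) (A : nat -> nat -> R) : fps {poly R} :=
  fun n => \sum_(k < n.+1) A n k *: 'X^k.

(* Convergents of the J-fraction J(a_1,a_2,...; b_1,b_2,...):
   jconv d i = 1/(1 - a_i x - b_i x^2/(1 - a_{i+1} x - ...)) truncated at depth d *)
Fixpoint jconv (T : unitRingType) (a b : nat -> T) (d i : nat) : fps T :=
  match d with
  | 0 => sone T
  | d'.+1 => sinv (ssub (ssub (sone T) (smul (sC (a i)) (sx T)))
                        (smul (smul (sC (b i)) (smul (sx T) (sx T)))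
                              (jconv a b d' i.+1)))
  end.

(* A equals the J-fraction J(a_1,...; b_1,...) as a formal power series:
   each coefficient of A is the eventual value of that coefficient of the
   convergents (x-adic limit). Indices start at 1. *)
Definition is_Jfrac (T : unitRingType) (A : fps T) (a b : nat -> T) : Prop :=
  forall n : nat, exists M : nat, forall d : nat, (M <= d)%N ->
    jconv a b d 1 n = A n.

From mathcomp Require Import all_boot all_algebra.
From mathcomp Require Import ring zify.
From Stdlib Require Import FunctionalExtensionality.
Set Implicit Arguments. Unset Strict Implicit. Unset Printing Implicit Defensive.
Import GRing.Theory.
Local Open Scope ring_scope.

(* In each of the three cases the n-th coefficient m_n (a polynomial in y) obeys
   m_0 = 1 and m_(n+1) = a m_n + n b m_(n-1), and any such sequence equals
   J(a, a, ...; b, 2b, 3b, ...): the series P_0 = 1 and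
   P_(i+1) = sum_n C(n+i, i) m_n x^n satisfy
   P_i = P_(i+1) (1 - a x) - (i+1) b x^2 P_(i+2),
   so P_(i+1) / P_i is the tail of the fraction starting at index i+1.
   Differentiating e^x f(x)^k with f' = 1 + r x gives the row recurrence
   h_(n+1,k) = h_(n,k) + h_(n,k-1) + n r h_(n-1,k-1); homogenising the rows in
   (y, 1), resp. in (1 + y, y) for the reversed f-matrix, turns it into the
   recurrence above with a = 1 + y, b = r y, resp. a = 1 + 2y, b = r y (1 + y).
   Comparing gamma expansions of the row polynomials yields
   gamma_(n+1,k) = gamma_(n,k) + n r gamma_(n-1,k-1), i.e. a = 1, b = r y. *)

Definition sshift (T : nzRingType) (a : fps T) : fps T :=
  fun n => if n is n'.+1 then a n' else 0.

Section SeriesRing.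
Variable T : comNzRingType.
Implicit Types (a b c : fps T) (p q : {poly T}).

Definition spoly p : fps T := fun n => p`_n.

Definition strunc a n : {poly T} := \poly_(i < n.+1) a i.

Lemma coef_strunc a n i : (i <= n)%N -> (strunc a n)`_i = a i.
Proof. by move=> le_in; rewrite coef_poly ltnS le_in. Qed.

Lemma smul_polyE a b p q n :
  (forall i, (i <= n)%N -> p`_i = a i) -> (forall i, (i <= n)%N -> q`_i = b i) ->
  smul a b n = (p * q)`_n.
Proof.
move=> Ep Eq; rewrite coefM; apply: eq_bigr => i _.
by rewrite Ep ?Eq ?leq_subr // -ltnS.
Qed.

Lemma smul_truncE a b n : smul a b n = (strunc a n * strunc b n)`_n.
Proof. by apply: smul_polyE => i; apply: coef_strunc. Qed.

Lemma coef_strunc_mul a b n i :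
  (i <= n)%N -> (strunc a n * strunc b n)`_i = smul a b i.
Proof.
move=> le_in; symmetry; apply: smul_polyE => j le_ji;
  by rewrite coef_strunc // (leq_trans le_ji).
Qed.

Lemma smulC a b : smul a b = smul b a.
Proof. by apply: functional_extensionality => n; rewrite !smul_truncE mulrC. Qed.

Lemma smulA a b c : smul (smul a b) c = smul a (smul b c).
Proof.
apply: functional_extensionality => n.
rewrite (smul_polyE (@coef_strunc_mul a b n) (@coef_strunc c n)) -mulrA.
by rewrite (smul_polyE (@coef_strunc a n) (@coef_strunc_mul b c n)).
Qed.

Lemma smulBl a b c : smul (ssub a b) c = ssub (smul a c) (smul b c).
Proof.
apply: functional_extensionality => n.
rewrite /smul /ssub /sadd /sopp -sumrN -big_split /=.
by apply: eq_bigr => i _; rewrite mulrDl mulNr.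
Qed.

Lemma smul1l a : smul (sone T) a = a.
Proof.
apply: functional_extensionality => n.
rewrite /smul big_ord_recl /sone /sC /= subn0 mul1r big1 ?addr0 // => i _.
by rewrite mul0r.
Qed.

Lemma smul1r a : smul a (sone T) = a.
Proof. by rewrite smulC smul1l. Qed.

Lemma coef_smulC (k : T) a n : smul (sC k) a n = k * a n.
Proof.
rewrite /smul big_ord_recl /sC /= subn0 big1 ?addr0 // => i _.
by rewrite mul0r.
Qed.

Lemma coef_smulx a n : smul (sx T) a n = sshift a n.
Proof.
case: n => [|n]; rewrite /smul big_ord_recl /sx /=; first by rewrite big_ord0 mul0r addr0.
rewrite big_ord_recl /= mul0r add0r mul1r subSS subn0 big1 ?addr0 // => i _.
by rewrite mul0r.
Qed.

Lemma coef_smulxx a n : smul (smul (sx T) (sx T)) a n = sshift (sshift a) n.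
Proof. by rewrite smulA coef_smulx; case: n => [|n] //=; rewrite coef_smulx. Qed.

Lemma eq_smul_coefl a a' b n :
  (forall i, (i <= n)%N -> a i = a' i) -> smul a b n = smul a' b n.
Proof. by move=> Ea; apply: eq_bigr => i _; rewrite Ea // -ltnS. Qed.

Lemma spolyM p q : spoly (p * q) = smul (spoly p) (spoly q).
Proof. by apply: functional_extensionality => n; symmetry; apply: smul_polyE. Qed.

Lemma spolyD p q : spoly (p + q) = sadd (spoly p) (spoly q).
Proof. by apply: functional_extensionality => n; rewrite /spoly coefD. Qed.

Lemma spolyC k : spoly k%:P = sC k.
Proof. by apply: functional_extensionality => n; rewrite /spoly coefC. Qed.

Lemma spolyX : spoly 'X = sx T.
Proof. by apply: functional_extensionality => n; rewrite /spoly /sx coefX; case: (n == 1%N). Qed.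

Lemma sexpn_spoly p k : sexpn (spoly p) k = spoly (p ^+ k).
Proof.
elim: k => [|k IHk]; first by rewrite expr0 -polyC1 spolyC.
by rewrite /sexpn iterS -/(sexpn _ k) IHk exprS spolyM.
Qed.

End SeriesRing.

Section SeriesInverse.
Variable T : comUnitRingType.
Implicit Types a : fps T.

Lemma size_sinv_rec a n : size (sinv_rec a n) = n.+1.
Proof. by elim: n => [|n IHn] //=; rewrite size_rcons IHn. Qed.

Lemma nth_sinv_rec a n i : (i <= n)%N -> nth 0 (sinv_rec a n) i = sinv a i.
Proof.
elim: n => [|n IHn]; first by rewrite leqn0 => /eqP ->.
rewrite leq_eqVlt => /predU1P[-> //|lt_in].
by rewrite /= nth_rcons size_sinv_rec lt_in IHn.
Qed.

Lemma sinvS a n :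
  sinv a n.+1 = - (a 0%N)^-1 * \sum_(i < n.+1) a i.+1 * sinv a (n - i)%N.
Proof.
rewrite {1}/sinv /= nth_rcons size_sinv_rec ltnn eqxx; congr (_ * _).
by apply: eq_bigr => i _; rewrite nth_sinv_rec // leq_subr.
Qed.

Lemma smul_sinv a : a 0%N \is a GRing.unit -> smul a (sinv a) = sone T.
Proof.
move=> a0_unit; apply: functional_extensionality => -[|n].
  by rewrite /smul big_ord_recl big_ord0 addr0 /sinv /= divrr.
rewrite /smul big_ord_recl subn0 sinvS mulrA mulrN divrr // mulN1r /sone /sC /=.
by under [in X in _ + X]eq_bigr => i _ do rewrite /bump leq0n add1n subSS; rewrite addNr.
Qed.

End SeriesInverse.

Section JFractionTails.
Variable T : comUnitRingType.
Variables (al be : nat -> T) (P : nat -> fps T).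
Hypothesis P_rec : forall i n, P i n =
  P i.+1 n - al i.+1 * sshift (P i.+1) n - be i.+1 * sshift (sshift (P i.+2)) n.

Lemma smul_jconv_tail d i n :
  (n < d.*2)%N -> smul (P i) (jconv al be d i.+1) n = P i.+1 n.
Proof.
elim: d i n => [//|d IHd] i n lt_n_2d /=.
set J := jconv al be d i.+2.
set Q := ssub (ssub (sone T) (smul (sC (al i.+1)) (sx T)))
              (smul (smul (sC (be i.+1)) (smul (sx T) (sx T))) J).
have Q0 : Q 0%N = 1.
  by rewrite /Q /ssub /sadd /sopp coef_smulC smulA coef_smulC coef_smulxx /sone /sC /sx /=; ring.
have PQ m : (m < d.*2.+2)%N -> smul (P i.+1) Q m = P i m.
  move=> lt_m_2d; rewrite P_rec smulC /Q !smulBl smul1l /ssub /sadd /sopp.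
  rewrite smulA coef_smulC coef_smulx !smulA coef_smulC -smulA coef_smulxx.
  case: m lt_m_2d => [|[|m]] //= lt_m_2d; rewrite smulC IHd //; ring.
rewrite (@eq_smul_coefl _ _ (smul (P i.+1) Q)); last first.
  by move=> j le_jn; rewrite PQ // (leq_ltn_trans le_jn) // -doubleS.
by rewrite smulA smul_sinv ?smul1r // Q0 unitr1.
Qed.

Lemma is_Jfrac_tails : P 0%N = sone T -> is_Jfrac (P 1%N) al be.
Proof.
move=> P0 n; exists n.+1 => d le_nd.
rewrite -(@smul_jconv_tail d 0) ?P0 ?smul1l // -addnn.
exact: leq_trans le_nd (leq_addr _ _).
Qed.

End JFractionTails.

Section HermiteJFraction.
Variable T : comUnitRingType.

Definition hermite_tails (m : fps T) (i : nat) : fps T :=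
  if i is i'.+1 then fun n => 'C(n + i', i')%:R * m n else sone T.

Lemma is_Jfrac_hermite (a b : T) (m : fps T) (al be : nat -> T) :
  (forall i, al i = a) -> (forall k, be k = k%:R * b) ->
  m 0%N = 1 -> (forall n, m n.+1 = a * m n + n%:R * b * sshift m n) ->
  is_Jfrac m al be.
Proof.
move=> al_a be_b m0 mS.
have -> : m = hermite_tails m 1.
  by apply: functional_extensionality => n; rewrite /= addn0 bin0 mul1r.
apply: is_Jfrac_tails => // -[|j] [|[|k]] /=; rewrite !al_a !be_b /sone /sC /=.
- by rewrite bin0 m0; ring.
- by rewrite !bin0 (mS 0%N); ring.
- by rewrite !addn0 !bin0 addn1 bin1 (mS k.+1) /=; ring.
- by rewrite !add0n !binn; ring.
- by rewrite !add1n !binSn binn (mS 0%N); ring.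
have pascal : ('C(k.+2 + j.+1, j.+1) = 'C(k.+2 + j, j.+1) + 'C(k.+2 + j, j))%N.
  by rewrite addnS binS.
have absorb : (j.+2 * 'C(k + j.+2, j.+2) = k.+1 * 'C(k.+2 + j, j.+1))%N.
  by rewrite mul_bin_left; congr (_ * _)%N; [lia | congr binomial; lia].
have -> : j.+2%:R * b * ('C(k + j.+2, j.+2)%N%:R * m k)
          = k.+1%:R * b * ('C(k.+2 + j, j.+1)%N%:R * m k).
  transitivity ((j.+2 * 'C(k + j.+2, j.+2))%N%:R * (b * m k)); first by rewrite natrM; ring.
  by rewrite absorb natrM; ring.
by rewrite pascal natrD (mS k.+1) /= addSnnS; ring.
Qed.

End HermiteJFraction.

Section Homogenization.
Variable R : comNzRingType.
Implicit Types (c d : nat -> R) (u v : {poly R}).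

Definition homog c u v N : {poly R} := \sum_(i < N.+1) c i *: (u ^+ i * v ^+ (N - i)).

Lemma homog_lin (x y : R) c d u v N :
  homog (fun i => x * c i + y * d i) u v N = x *: homog c u v N + y *: homog d u v N.
Proof.
rewrite /homog !scaler_sumr -big_split /=; apply: eq_bigr => i _.
by rewrite scalerDl !scalerA.
Qed.

Lemma homog_shift c u v N : homog (sshift c) u v N.+1 = u * homog c u v N.
Proof.
rewrite /homog big_ord_recl /= scale0r add0r mulr_sumr; apply: eq_bigr => i _.
by rewrite /bump leq0n add1n subSS exprS -scalerAr mulrA.
Qed.

Lemma homogS c u v N : c N.+1 = 0 -> homog c u v N.+1 = v * homog c u v N.
Proof.
move=> cN1; rewrite /homog big_ord_recr /= cN1 scale0r addr0 mulr_sumr.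
apply: eq_bigr => i _; rewrite subSn; last by rewrite -ltnS.
by rewrite exprS -scalerAr mulrCA.
Qed.

Section RowRecurrence.
Variables (A : nat -> nat -> R) (x y s : R).
Hypothesis A_tri : forall n i, (n < i)%N -> A n i = 0.
Hypothesis A_rec : forall n i,
  A n.+1 i = x * A n i + y * sshift (A n) i + n%:R * s * sshift (A n.-1) i.

Lemma homog_rec u v n :
  homog (A n.+1) u v n.+1 = (x *: v + y *: u) * homog (A n) u v n
    + n%:R * (s *: (u * v)) * sshift (fun m => homog (A m) u v m) n.
Proof.
have -> : A n.+1 = fun i =>
    1 * (x * A n i + y * sshift (A n) i) + n%:R * s * sshift (A n.-1) i.
  by apply: functional_extensionality => i; rewrite A_rec mul1r.
rewrite homog_lin scale1r homog_lin homog_shift homogS ?A_tri //.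
case: n => [|n] /=; first by rewrite mul0r scale0r !mul0r !addr0 mulrDl !scalerAl.
rewrite homog_shift (@homogS (A n)) ?A_tri // mulrDl !scalerAl; congr (_ + _).
by rewrite -scalerA scaler_nat mulr_natl !mulrA -mulrnAl.
Qed.

End RowRecurrence.
End Homogenization.

Lemma is_Jfrac_homog (R : idomainType) (A : nat -> nat -> R) (x y s : R)
    (u v : {poly R}) (al be : nat -> {poly R}) :
  A 0%N 0%N = 1 -> (forall n i, (n < i)%N -> A n i = 0) ->
  (forall n i, A n.+1 i = x * A n i + y * sshift (A n) i + n%:R * s * sshift (A n.-1) i) ->
  (forall i, al i = x *: v + y *: u) -> (forall k, be k = (k%:R * s) *: (u * v)) ->
  is_Jfrac (fun n => homog (A n) u v n) al be.
Proof.
move=> A00 A_tri A_rec al_E be_E.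
apply: (is_Jfrac_hermite al_E) => [k||n].
- by rewrite be_E -scalerA scaler_nat mulr_natl.
- by rewrite /homog big_ord1 A00 scale1r mulr1.
- exact: homog_rec.
Qed.

Lemma eq_coefMl (R : nzRingType) (q q' p : {poly R}) n :
  (forall i, (i <= n)%N -> q`_i = q'`_i) -> (q * p)`_n = (q' * p)`_n.
Proof. by move=> Eq; rewrite !coefM; apply: eq_bigr => i _; rewrite Eq // -ltnS. Qed.

Section ExpTimesPoly.
Variable R : fieldType.
Hypothesis R_char0 : [pchar R] =i pred0.
Implicit Types p q : {poly R}.

Lemma natr_neq0 n : (0 < n)%N -> n%:R != 0 :> R.
Proof. by have /pcharf0P -> := R_char0; rewrite -lt0n. Qed.

Lemma fact_neq0 n : n`!%:R != 0 :> R.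
Proof. exact/natr_neq0/fact_gt0. Qed.

Definition exp_mul_coef p n : R := (strunc (sexp R) n * p)`_n.

Lemma exp_mul_coef1 n : exp_mul_coef 1 n = (n`!%:R)^-1.
Proof. by rewrite /exp_mul_coef mulr1 coef_strunc. Qed.

Lemma exp_mul_coefXn k n : exp_mul_coef 'X^k n = if (n < k)%N then 0 else ((n - k)`!%:R)^-1.
Proof. by rewrite /exp_mul_coef coefMXn coef_strunc // leq_subr. Qed.

Lemma exp_mul_coefXnM k p n : (n < k)%N -> exp_mul_coef ('X^k * p) n = 0.
Proof. by move=> lt_nk; rewrite /exp_mul_coef mulrCA coefXnM lt_nk. Qed.

Lemma exp_mul_coefM1X p (c : R) n :
  exp_mul_coef (p * (1 + c *: 'X)) n = exp_mul_coef p n + c * sshift (exp_mul_coef p) n.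
Proof.
rewrite /exp_mul_coef mulrDr mulr1 -scalerAr mulrDr -scalerAr coefD coefZ mulrA coefMX.
case: n => [|n] /=; first by rewrite mulr0 addr0.
congr (_ + c * _); apply: eq_coefMl => i le_in.
by rewrite !coef_strunc // (leq_trans le_in).
Qed.

Lemma deriv_strunc_sexp n : (strunc (sexp R) n.+1)^`() = strunc (sexp R) n.
Proof.
apply/polyP => i; rewrite coef_deriv !coef_poly ltnS.
case: ltnP => _; last by rewrite mul0rn.
by rewrite /sexp factS natrM invfM -mulrnAl -mulr_natr mulVf ?mul1r ?natr_neq0.
Qed.

Lemma exp_mul_coef_deriv p n :
  n.+1%:R * exp_mul_coef p n.+1 = exp_mul_coef p n + exp_mul_coef p^`() n.
Proof.
rewrite /exp_mul_coef mulr_natl -coef_deriv derivM deriv_strunc_sexp coefD.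
congr (_ + _); apply: eq_coefMl => i le_in.
by rewrite !coef_strunc // (leq_trans le_in).
Qed.

Lemma exp_riordan_sexp_poly p n k :
  exp_riordan (sexp R) (spoly p) n k = n`!%:R / k`!%:R * exp_mul_coef (p ^+ k) n.
Proof.
rewrite /exp_riordan sexpn_spoly; congr (_ * _).
by apply: smul_polyE => i le_in; rewrite ?coef_strunc.
Qed.

End ExpTimesPoly.

Section PascalLike.
Variables (R : fieldType) (r : R).
Hypothesis R_char0 : [pchar R] =i pred0.

Let F : {poly R} := 'X * (1 + (r / 2%:R) *: 'X).

Lemma Hmat_exp_coef n k : Hmat r n k = n`!%:R / k`!%:R * exp_mul_coef (F ^+ k) n.
Proof.
rewrite /Hmat; have -> : sadd (sx R) (smul (sC (r / 2%:R)) (smul (sx R) (sx R))) = spoly F.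
  by rewrite -spolyX -spolyC -!spolyM -spolyD /F -mul_polyC; congr spoly; ring.
exact: exp_riordan_sexp_poly.
Qed.

Lemma deriv_F : F^`() = 1 + r *: 'X.
Proof.
have r_half : r = r / 2%:R + r / 2%:R by field; rewrite natr_neq0.
rewrite /F derivM derivX derivD -polyC1 derivC derivZ derivX.
by rewrite -!mul_polyC {3}r_half polyCD; ring.
Qed.

Lemma exp_mul_coef_Fpow n k : n.+1%:R * exp_mul_coef (F ^+ k.+1) n.+1 =
  exp_mul_coef (F ^+ k.+1) n
  + k.+1%:R * (exp_mul_coef (F ^+ k) n + r * sshift (exp_mul_coef (F ^+ k)) n).
Proof.
rewrite exp_mul_coef_deriv // deriv_exp deriv_F /= mulrC -exp_mul_coefM1X.
by rewrite /exp_mul_coef mulrnAr coefMn mulr_natl.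
Qed.

Lemma Hmat_col0 n : Hmat r n 0%N = 1.
Proof. by rewrite Hmat_exp_coef expr0 exp_mul_coef1 fact0 divr1 mulfV ?fact_neq0. Qed.

Lemma Hmat_tri n k : (n < k)%N -> Hmat r n k = 0.
Proof. by move=> lt_nk; rewrite Hmat_exp_coef /F exprMn exp_mul_coefXnM ?mulr0. Qed.

Lemma Hmat_rec n k :
  Hmat r n.+1 k = Hmat r n k + sshift (Hmat r n) k + n%:R * r * sshift (Hmat r n.-1) k.
Proof.
case: k => [|k] /=; first by rewrite !Hmat_col0 mulr0 !addr0.
rewrite !Hmat_exp_coef.
transitivity (n`!%:R / k.+1`!%:R * (n.+1%:R * exp_mul_coef (F ^+ k.+1) n.+1)).
  by rewrite factS natrM; field; rewrite fact_neq0.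
rewrite exp_mul_coef_Fpow factS natrM.
case: n => [|n] /=; last rewrite factS natrM;
  by field; rewrite nat1r (fact_neq0 R_char0) (natr_neq0 R_char0).
Qed.

End PascalLike.

Lemma binmat_bin (R : fieldType) n k :
  [pchar R] =i pred0 -> binmat R n k = 'C(n, k)%:R.
Proof.
move=> R_char0.
rewrite /binmat -spolyX exp_riordan_sexp_poly // exp_mul_coefXn.
case: ltnP => [lt_nk | le_kn]; first by rewrite bin_small // mulr0.
rewrite -(bin_fact le_kn) !natrM; field.
by rewrite !fact_neq0.
Qed.

Lemma coef_1DX_exp (R : nzRingType) i j : ((1 + 'X : {poly R}) ^+ i)`_j = 'C(i, j)%:R.
Proof.
elim: i j => [|i IHi] [|j]; rewrite ?expr0 ?coef1 // exprS mulrDl mul1r coefD coefXM.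
  by rewrite IHi !bin0 addr0.
by rewrite /= !IHi binS natrD addrC.
Qed.

Section GammaPoly.
Variable R : comNzRingType.
Implicit Types c d : nat -> R.

Definition gamma_poly c N : {poly R} :=
  \sum_(k < N.+1) c k *: ('X^k * (1 + 'X) ^+ (N - k.*2)).

Lemma gamma_poly_lin (x y : R) c d N :
  gamma_poly (fun k => x * c k + y * d k) N = x *: gamma_poly c N + y *: gamma_poly d N.
Proof.
rewrite /gamma_poly !scaler_sumr -big_split /=; apply: eq_bigr => i _.
by rewrite scalerDl !scalerA.
Qed.

Lemma gamma_polyS c N : (forall k, (N./2 < k)%N -> c k = 0) ->
  gamma_poly c N.+1 = (1 + 'X) * gamma_poly c N.
Proof.
move=> c_supp; rewrite /gamma_poly big_ord_recr /= c_supp ?scale0r ?addr0; last first.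
  by rewrite ltn_half_double; lia.
rewrite mulr_sumr; apply: eq_bigr => i _.
have [le_2i_N | lt_N_2i] := leqP (i : nat).*2 N.
  by rewrite subSn // exprS -scalerAr mulrCA.
by rewrite c_supp ?scale0r ?mulr0 // ltn_half_double.
Qed.

Lemma gamma_poly_shift c N : (forall k, (N./2 < k)%N -> c k = 0) ->
  gamma_poly (sshift c) N.+2 = 'X * gamma_poly c N.
Proof.
move=> c_supp; rewrite /gamma_poly big_ord_recl /= scale0r add0r big_ord_recr /=.
rewrite c_supp ?scale0r ?addr0; last by rewrite ltn_half_double; lia.
rewrite mulr_sumr; apply: eq_bigr => i _.
by rewrite /bump leq0n add1n doubleS !subSS exprS -scalerAr mulrA.
Qed.

Lemma gamma_poly_eq0 d N : (forall k, (N./2 < k)%N -> d k = 0) ->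
  gamma_poly d N = 0 -> forall k, d k = 0.
Proof.
move=> d_supp dN0 k; elim/ltn_ind: k => k IHk.
have [le_kN | lt_Nk] := leqP k N; last by rewrite d_supp // ltn_half_double; lia.
have /(congr1 (fun p : {poly R} => p`_k)) := dN0.
rewrite coef0 coef_sum (bigD1 (Ordinal (le_kN : k < N.+1)%N)) //=.
rewrite coefZ coefXnM ltnn subnn coef_1DX_exp bin0 mulr1 big1 ?addr0 // => i ne_ik.
rewrite coefZ coefXnM; case: ltnP => [_|le_ik]; first by rewrite mulr0.
rewrite IHk ?mul0r // ltn_neqAle le_ik andbT.
by apply: contraNneq ne_ik => eq_ik; apply/eqP/val_inj.
Qed.

End GammaPoly.

Section GammaMatrix.
Variables (R : comNzRingType) (h g : nat -> nat -> R) (s : R).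
Hypothesis hg : is_gamma_matrix h g.
Hypothesis h_tri : forall n k, (n < k)%N -> h n k = 0.
Hypothesis h_rec : forall n k,
  h n.+1 k = h n k + sshift (h n) k + n%:R * s * sshift (h n.-1) k.

Lemma gamma_supp n k : (n./2 < k)%N -> g n k = 0.
Proof. by case: hg => g_supp _; apply: g_supp. Qed.

Lemma gamma_tri n k : (n < k)%N -> g n k = 0.
Proof. by move=> lt_nk; apply: gamma_supp; rewrite ltn_half_double; lia. Qed.

Lemma homog_row_gamma n : homog (h n) 'X 1 n = gamma_poly (g n) n.
Proof.
case: hg => _ /(_ n) hgn; rewrite /homog.
under eq_bigr => i _ do rewrite expr1n mulr1.
rewrite hgn /gamma_poly.
have le_half_n : (n./2.+1 <= n.+1)%N by rewrite ltnS -leq_double -addnn; lia.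
rewrite (big_ord_widen _ (fun k => g n k *: ('X^k * (1 + 'X) ^+ (n - k.*2))) le_half_n).
rewrite big_mkcond; apply: eq_bigr => i _; case: ltnP => //= le_i_half.
by rewrite gamma_supp ?scale0r.
Qed.

Lemma gamma00 : g 0%N 0%N = h 0%N 0%N.
Proof.
have /(congr1 (fun p : {poly R} => p`_0)) := homog_row_gamma 0.
by rewrite /homog /gamma_poly !big_ord1 !coefZ !mulr1 !coef1 !mulr1 /=.
Qed.

Lemma gamma_rec n k : g n.+1 k = g n k + n%:R * s * sshift (g n.-1) k.
Proof.
pose d k := 1 * g n.+1 k + (-1) * (1 * g n k + (n%:R * s) * sshift (g n.-1) k).
have d_supp j : (n.+1./2 < j)%N -> d j = 0.
  move=> lt_half_j; rewrite /d !gamma_supp ?(leq_ltn_trans (half_leq (leqnSn n))) //.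
  case: n lt_half_j {d} => [|n] lt_half_j /=; first by rewrite mul0r; ring.
  case: j lt_half_j => [|j] //= lt_half_j; rewrite gamma_supp; first by ring.
  by move: lt_half_j; rewrite !ltn_half_double; lia.
have d_poly : gamma_poly d n.+1 = 0.
  have h_rec' m i : h m.+1 i = 1 * h m i + 1 * sshift (h m) i + m%:R * s * sshift (h m.-1) i.
    by rewrite !mul1r h_rec.
  have hS := homog_rec h_tri h_rec' 'X 1 n.
  rewrite !gamma_poly_lin -!homog_row_gamma gamma_polyS; last exact: gamma_supp.
  rewrite -homog_row_gamma hS scale1r scaleN1r.
  rewrite alg_polyC polyC1 !scale1r mulr1.
  case: n {d d_supp hS h_rec'} => [|n] /=; first by rewrite !mul0r scale0r !addr0 subrr.
  rewrite gamma_poly_shift; last exact: gamma_supp.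
  by rewrite -homog_row_gamma -scalerA scaler_nat -!mul_polyC; ring.
apply: subr0_eq; rewrite -(gamma_poly_eq0 d_supp d_poly k) /d; ring.
Qed.

End GammaMatrix.

Lemma ogf_homog (R : comNzRingType) (A : nat -> nat -> R) :
  ogf A = fun n => homog (A n) 'X 1 n.
Proof.
apply: functional_extensionality => n.
by apply: eq_bigr => i _; rewrite expr1n mulr1.
Qed.

Lemma ogf_rev_mul_binmat (R : fieldType) (A : nat -> nat -> R) :
  [pchar R] =i pred0 ->
  ogf (revmat (lt_mxmul A (binmat R))) = fun n => homog (A n) (1 + 'X) 'X n.
Proof.
move=> R_char0; apply: functional_extensionality => n; apply/polyP => j.
rewrite /ogf -poly_def coef_poly /homog coef_sum /revmat /lt_mxmul ltnS.
case: leqP => [le_jn | lt_nj].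
  apply: eq_bigr => i _; rewrite binmat_bin // coefZ coefMXn coef_1DX_exp.
  have le_in := ltn_ord i; rewrite ltnS in le_in.
  case: ltnP => [lt_j_ni | le_ni_j]; first by rewrite bin_small //; lia.
  have -> : (j - (n - i) = i - (n - j))%N by lia.
  by rewrite bin_sub //; lia.
rewrite big1 // => i _; rewrite coefZ coefMXn coef_1DX_exp.
have le_in := ltn_ord i; rewrite ltnS in le_in.
by case: ltnP => _; rewrite ?bin_small ?mulr0 //; lia.
Qed.

Theorem proposition4 (R : fieldType) (hR : [pchar R] =i pred0) (r : R)
    (gam : nat -> nat -> R) (hgam : is_gamma_matrix (Hmat r) gam) :
  [/\ is_Jfrac (ogf gam) (fun _ => 1) (fun k => (k%:R * r) *: 'X),
      is_Jfrac (ogf (Hmat r)) (fun _ => 'X + 1) (fun k => (k%:R * r) *: 'X)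
    & is_Jfrac (ogf (revmat (eFmat r))) (fun _ => 2%:R *: 'X + 1)
               (fun k => (k%:R * r) *: ('X * ('X + 1)))].
Proof.
have H_tri := @Hmat_tri _ r.
have H_rec n k : Hmat r n.+1 k =
    1 * Hmat r n k + 1 * sshift (Hmat r n) k + n%:R * r * sshift (Hmat r n.-1) k.
  by rewrite Hmat_rec // !mul1r.
have H00 : Hmat r 0%N 0%N = 1 by exact: Hmat_col0.
split.
- rewrite ogf_homog; apply: (@is_Jfrac_homog _ _ 1 0 r) => [||n k|i|k] //.
  + by rewrite (gamma00 hgam).
  + exact: (gamma_tri hgam).
  + by rewrite (gamma_rec hgam H_tri (@Hmat_rec _ r hR)) mul1r mul0r addr0.
  + by rewrite scale1r scale0r addr0.
  + by rewrite mulr1.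
- rewrite ogf_homog; apply: (@is_Jfrac_homog _ _ 1 1 r) => // [i|k].
  + by rewrite !scale1r addrC.
  + by rewrite mulr1.
- rewrite /eFmat ogf_rev_mul_binmat //; apply: (@is_Jfrac_homog _ _ 1 1 r) => // [i|k].
  + by rewrite !scale1r scaler_nat mulr2n; ring.
  + by rewrite (mulrC (1 + _)) addrC.
Qed.
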